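(* Assume that $\pi$ is a permutation of length $j$ and $\delta=\delta_1\cdots\delta_{k+1}$ is a permutation of length $k+1$, disjoint from each other, where $\mathrm{des}(\pi) = j'$ and $\mathrm{des}(\delta) = k'$. Moreover, $\delta_1<\delta_2$ and all of the elements of $\delta$ are larger than the elements of $\pi$. Then \begin{align*} \sum_{\alpha \in \mathrm{Sh}_l(\pi,\delta)} t^{\mathrm{des}(\alpha)}&=\sum_{i\geq 1} \binom{k+1-k'+j'}{i+j'-k'} \binom{j-j'+k'-1}{i-1} t^{i+j'},\\ \sum_{\alpha \in \mathrm{Sh}_{ls}(\pi,\delta)} t^{\mathrm{des}(\alpha)}&=\sum_{i\geq 1} \binom{k-k'+j'}{i+j'-k'} \binom{j-j'+k'-1}{i-1} t^{i+j'},\\ \sum_{\alpha \in \mathrm{Sh}_{ll}(\pi,\delta)} t^{\mathrm{des}(\alpha)}&=\sum_{i\geq 1} \binom{k-k'+j'}{i+j'-k'} \binom{j-j'+k'-1}{i-1} t^{i+j'}. \end{align*}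
   Context: A permutation of length $n$ here means a sequence of $n$ distinct integers (not necessarily $1,\dots,n$); two permutations are disjoint if they have no letters in common. For $\alpha=\alpha_1\cdots\alpha_n$, $\mathrm{des}(\alpha)$ is the number of indices $i$ with $\alpha_i>\alpha_{i+1}$. For disjoint permutations $\pi=\pi_1\cdots\pi_m$ and $\delta=\delta_1\cdots\delta_n$, a shuffle of $\pi$ and $\delta$ is a permutation $\alpha=\alpha_1\cdots\alpha_{m+n}$ containing both $\pi$ and $\delta$ as subsequences. $\mathrm{Sh}_l(\pi,\delta)$ is the set of shuffles with $\alpha_1=\delta_1$; $\mathrm{Sh}_{ls}(\pi,\delta)$ is the set of shuffles with $\alpha_1=\delta_1$ and $\alpha_{n+m}=\delta_n$ (the last letter of $\delta$); $\mathrm{Sh}_{ll}(\pi,\delta)$ is the set of shuffles with $\alpha_1=\delta_1$ and $\alpha_2=\delta_2$. *)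

From mathcomp Require Import all_boot all_order all_algebra.
Set Implicit Arguments. Unset Strict Implicit. Unset Printing Implicit Defensive.
Import Order.TTheory GRing.Theory Num.Theory.

(* A "permutation" is a duplicate-free sequence of integers (seq int, uniq). *)

Definition des (s : seq int) : nat :=
  \sum_(i < (size s).-1) (nth 0%R s i.+1 < nth 0%R s i)%R.

Definition is_shuffle (pi delta alpha : seq int) : bool :=
  [&& uniq alpha, size alpha == size pi + size delta,
      subseq pi alpha & subseq delta alpha].

(* Any shuffle of disjoint pi, delta is a rearrangement of pi ++ delta,
   so the (finite) sets of shuffles are enumerated by filtering the
   duplicate-free list of all rearrangements of pi ++ delta. *)
Definition Sh_l (pi delta : seq int) : seq (seq int) :=
  [seq a <- permutations (pi ++ delta) |
     is_shuffle pi delta a && (nth 0%R a 0 == nth 0%R delta 0)].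

Definition Sh_ls (pi delta : seq int) : seq (seq int) :=
  [seq a <- permutations (pi ++ delta) |
     [&& is_shuffle pi delta a, nth 0%R a 0 == nth 0%R delta 0
       & last 0%R a == last 0%R delta]].

Definition Sh_ll (pi delta : seq int) : seq (seq int) :=
  [seq a <- permutations (pi ++ delta) |
     [&& is_shuffle pi delta a, nth 0%R a 0 == nth 0%R delta 0
       & nth 0%R a 1 == nth 0%R delta 1]].

Definition binz (n : nat) (m : int) : nat :=
  match m with Posz m' => 'C(n, m') | Negz _ => 0 end.

Definition desgen (S : seq (seq int)) : {poly int} :=
  (\sum_(a <- S) 'X^(des a))%R.

From mathcomp Require Import all_boot all_order all_algebra ring zify.
Import Order.TTheory GRing.Theory Num.Theory.

(* Since every letter of [pi] is below every letter of [delta], a shuffle that starts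
   with a letter of [delta] is determined by the gaps of [delta] it keeps and the gaps
   of [pi] it cuts, and it has [des pi + 1] descents plus one for each kept descent of
   [delta] and each cut ascent of [pi].  Its descent polynomial is therefore
   [X ^ (des pi + 1)] times a coefficient of [\prod_(b <- w) (1 + X ^ b * u)], where [w]
   lists the descents of [delta] and the ascents of [pi]; by Vandermonde's convolution
   that coefficient is the binomial sum of the statement.  Instead of building the
   bijection, both sides are shown to satisfy the same recursion on the first letter
   of the shuffle.  Pinning the last letter removes the free choice of whether the
   shuffle ends with [pi] or with [delta] (the letter [false] heading the word in the
   unpinned case), and [Sh_ll] reduces to [Sh_l] for [delta] without its first letter
   because [delta_1 < delta_2]. *)

Set Implicit Arguments.
Unset Strict Implicit.
Unset Printing Implicit Defensive.

Section Shuffles.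
Variable T : eqType.
Implicit Types (x y : T) (s t a : seq T).

Fixpoint shuffles s t : seq (seq T) :=
  if s is x :: s' then
    let fix shuffles_x t :=
      if t is y :: t' then [seq x :: a | a <- shuffles s' t] ++ [seq y :: a | a <- shuffles_x t']
      else [:: s] in
    shuffles_x t
  else [:: t].

Arguments shuffles : simpl never.

Lemma shuffles0s t : shuffles [::] t = [:: t]. Proof. by []. Qed.
Lemma shuffless0 s : shuffles s [::] = [:: s]. Proof. by case: s. Qed.
Lemma shuffles_cons x s y t :
  shuffles (x :: s) (y :: t) =
  [seq x :: a | a <- shuffles s (y :: t)] ++ [seq y :: a | a <- shuffles (x :: s) t].
Proof. by []. Qed.

Lemma subseq_cons_notin y s t : y \notin s -> subseq s (y :: t) = subseq s t.
Proof.
case: s => [|x s]; first by rewrite !sub0seq.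
by rewrite /= inE negb_or eq_sym => /andP[/negbTE->].
Qed.

Lemma perm_cons_cat s y t : perm_eql (s ++ y :: t) (y :: s ++ t).
Proof. exact: (perm_catCA s [:: y] t). Qed.

Lemma notin_cat_cons s y t : uniq (s ++ y :: t) -> y \notin s.
Proof. by rewrite cat_uniq /= negb_or => /and3P[_ /andP[]]. Qed.

Lemma perm_subseq_eq s t : perm_eq s t -> subseq t s -> s = t.
Proof. by move=> Pst /size_subseq_leqif[_]; rewrite (perm_size Pst) eqxx => /esym/eqP. Qed.

Lemma mem_map_cons x (A : seq (seq T)) w a :
  (w :: a \in [seq x :: b | b <- A]) = (w == x) && (a \in A).
Proof.
by apply/mapP/andP => [[b Ab [-> ->]] | [/eqP-> Aa]]; [rewrite eqxx | exists a].
Qed.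

Lemma mem_shuffles s t a :
  uniq (s ++ t) -> (a \in shuffles s t) = [&& perm_eq a (s ++ t), subseq s a & subseq t a].
Proof.
elim: s t a => [|x s IHs] t a Ust.
  rewrite shuffles0s inE sub0seq /=; apply/eqP/andP => [-> | [/perm_subseq_eq]//].
  by rewrite perm_refl subseq_refl.
elim: t a Ust => [|y t IHt] a Ust.
  rewrite shuffless0 inE cats0 sub0seq andbT; apply/eqP/andP => [-> | [/perm_subseq_eq]//].
  by rewrite perm_refl subseq_refl.
have Uyxst : uniq (y :: (x :: s) ++ t) by rewrite -(perm_uniq (permEl (perm_cons_cat _ _ _))).
have [x_syt Usyt] : x \notin s ++ y :: t /\ uniq (s ++ y :: t) by apply/andP.
have [y_xst Uxst] : y \notin (x :: s) ++ t /\ uniq ((x :: s) ++ t) by apply/andP.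
have x_yt : x \notin y :: t by apply: contra x_syt; rewrite mem_cat orbC => ->.
have y_xs : y \notin x :: s by apply: contra y_xst; rewrite mem_cat => ->.
case: a => [|w a].
  by rewrite shuffles_cons mem_cat; apply/idP/and3P => [/orP[] /mapP[] | [/perm_size]].
rewrite shuffles_cons mem_cat !mem_map_cons.
have [-> | w_x] := eqVneq w x.
  rewrite (negbTE (memPn y_xs _ (mem_head _ _))) orbF IHs //.
  by rewrite perm_cons (subseq_cons_notin a x_yt) /= eqxx.
have [-> | w_y] := eqVneq w y.
  rewrite IHt // [perm_eq a _]perm_sym [perm_eq (y :: a) _]perm_sym perm_cons_cat perm_cons.
  by rewrite (subseq_cons_notin a y_xs) /= eqxx.
(* [w] lies in [s] or in [t], hence also in [a]: it would occur twice in [w :: a]. *)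
rewrite /= eq_sym (negbTE w_x) eq_sym (negbTE w_y); apply/esym/and3P.
move=> [Pa Sxs Syt]; have := perm_uniq Pa; rewrite Ust /= => /andP[/negP[]].
have := perm_mem Pa w; rewrite mem_head inE mem_cat inE (negbTE w_x) (negbTE w_y) /=.
case/esym/orP => [w_s | w_t]; [apply: (mem_subseq Sxs) | apply: (mem_subseq Syt)].
  by rewrite inE w_s orbT.
by rewrite inE w_t orbT.
Qed.

Lemma uniq_shuffles s t : uniq (s ++ t) -> uniq (shuffles s t).
Proof.
elim: s t => [|x s IHs] t Ust; first by rewrite shuffles0s.
elim: t Ust => [|y t IHt] Ust; first by rewrite shuffless0.
have Uyxst : uniq (y :: (x :: s) ++ t) by rewrite -(perm_uniq (permEl (perm_cons_cat _ _ _))).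
have x_y : x != y by apply: contraNneq (proj1 (andP Uyxst)) => ->; rewrite mem_head.
rewrite shuffles_cons cat_uniq !map_inj_uniq; try by move=> a b [].
rewrite IHs; last by case/andP: Ust.
rewrite IHt; last by case/andP: Uyxst.
rewrite andbT andTb; apply/hasPn => _ /mapP[a _ ->]; apply/negP => /mapP[b _ [x_y']].
by rewrite x_y' eqxx in x_y.
Qed.

Lemma filter_shuffles_head x0 s y t : y \notin s ->
  [seq a <- shuffles s (y :: t) | nth x0 a 0 == y] = [seq y :: a | a <- shuffles s t].
Proof.
case: s => [|x s] y_s; first by rewrite shuffles0s /= eqxx.
rewrite shuffles_cons filter_cat !filter_map /preim /= (negbTE (memPn y_s _ (mem_head _ _))).
by rewrite eqxx filter_pred0 filter_predT.
Qed.
End Shuffles.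

Local Open Scope ring_scope.

Definition choose_poly (A B n : nat) : {poly int} :=
  \sum_(v < n.+1) ('C(B, v) * 'C(A, n - v))%:R * 'X^v.

Lemma choose_poly0 A B : choose_poly A B 0 = 1.
Proof. by rewrite /choose_poly big_ord1 !bin0 expr0 mulr1. Qed.

Lemma choose_polySr A B n :
  choose_poly A B.+1 n.+1 = choose_poly A B n.+1 + 'X * choose_poly A B n.
Proof.
rewrite /choose_poly big_ord_recl [in RHS]big_ord_recl /= !bin0 -addrA; congr (_ + _).
rewrite mulr_sumr -big_split /=; apply: eq_bigr => i _.
rewrite /bump /= add1n subSS binS mulnDl natrD mulrDl exprS; congr (_ + _).
exact: mulrCA.
Qed.

Lemma choose_polySl A B n :
  choose_poly A.+1 B n.+1 = choose_poly A B n.+1 + choose_poly A B n.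
Proof.
rewrite /choose_poly big_ord_recr [in X in _ = X + _]big_ord_recr /= !subnn !bin0 addrAC.
congr (_ + _); rewrite -big_split /=; apply: eq_bigr => i _.
by rewrite subSn ?binS ?mulnDr ?natrD ?mulrDl // -ltnS.
Qed.

Lemma choose_poly_eq0 A B n : (A + B < n)%N -> choose_poly A B n = 0.
Proof.
elim: A B n => [|A IHA] B [|n] // lt_ABn; last by rewrite choose_polySl !IHA ?addr0 //; lia.
elim: B n lt_ABn => [|B IHB] n lt_Bn.
  by rewrite /choose_poly big1 // => -[[|v] ?] _; rewrite ?bin0n /= ?muln0 ?mul0n mul0r.
by case: n lt_Bn => // n lt_Bn; rewrite choose_polySr !IHB ?mulr0 ?addr0 //; lia.
Qed.

Lemma choose_poly_top A B : choose_poly A B (A + B) = 'X^B.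
Proof.
elim: A B => [|A IHA] B; last by rewrite addSn choose_polySl IHA choose_poly_eq0 ?add0r.
elim: B => [|B IHB]; first by rewrite choose_poly0.
by rewrite add0n choose_polySr choose_poly_eq0 // -[B in choose_poly _ _ B]add0n IHB add0r exprS.
Qed.

(* [subset_poly l n] is the coefficient of [u ^ n] in [\prod_(b <- l) (1 + X ^ b * u)]. *)
Definition subset_poly (l : seq bool) : nat -> {poly int} :=
  choose_poly (count negb l) (count id l).

Lemma subset_poly0 l : subset_poly l 0 = 1.
Proof. exact: choose_poly0. Qed.

Lemma subset_poly_cons b l n :
  subset_poly (b :: l) n.+1 = subset_poly l n.+1 + 'X^b * subset_poly l n.
Proof. by case: b; rewrite /subset_poly /= ?add0n ?add1n ?choose_polySr ?choose_polySl ?mul1r. Qed.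

Lemma perm_subset_poly l1 l2 : perm_eq l1 l2 -> subset_poly l1 = subset_poly l2.
Proof. by move=> /permP eq_count; rewrite /subset_poly !eq_count. Qed.

Lemma subset_poly_size l : subset_poly l (size l) = 'X^(count id l).
Proof. by rewrite /subset_poly -(count_predC id l) addnC choose_poly_top. Qed.

Lemma subset_poly_mid l1 b l2 : subset_poly (l1 ++ b :: l2) = subset_poly (b :: l1 ++ l2).
Proof. exact/perm_subset_poly/permEl/perm_cons_cat. Qed.

Lemma subset_poly_consX (b : bool) D L n :
  'X * ('X^D * subset_poly L n.+1) + 'X^b * ('X^(D.+1) * subset_poly L n) =
  'X^(D.+1) * subset_poly (b :: L) n.+1.
Proof. by rewrite subset_poly_cons !exprS; ring. Qed.

Lemma subset_poly_consNX (b : bool) D L n :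
  'X^b * ('X^D * subset_poly L n.+1) + 'X^(D.+1) * subset_poly L n =
  'X^(b + D) * subset_poly (~~ b :: L) n.+1.
Proof. by rewrite subset_poly_cons exprD; case: b; rewrite /= !exprS; ring. Qed.

Fixpoint des_seq (s : seq int) : seq bool :=
  if s is x :: s' then
    if s' is y :: _ then (y < x) :: des_seq s' else [::]
  else [::].

Lemma des1 x : des [:: x] = 0%N.
Proof. by rewrite /des big_ord0. Qed.

Lemma des_cons2 x y s : des [:: x, y & s] = ((y < x)%R + des (y :: s))%N.
Proof. by rewrite /des /= big_ord_recl. Qed.

Lemma des_count s : des s = count id (des_seq s).
Proof.
elim: s => [|x [|y s] IHs]; first by rewrite /des big_ord0.
  exact: des1.
by rewrite des_cons2 IHs.
Qed.

Lemma size_des_seq s : size (des_seq s) = (size s).-1.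
Proof. by elim: s => [|x [|y s] IHs] //=; rewrite IHs. Qed.

Lemma count_negb_des_seq s : count negb (des_seq s) = ((size s).-1 - des s)%N.
Proof. by rewrite -size_des_seq des_count -(count_predC id) addKn. Qed.

Definition shuffle_desgen (P : pred int) (z : int) (p d : seq int) : {poly int} :=
  \sum_(a <- shuffles p d | P (last z a)) 'X^(des (z :: a)).

Lemma shuffle_desgen0s P z d :
  shuffle_desgen P z [::] d = if P (last z d) then 'X^(des (z :: d)) else 0.
Proof. by rewrite /shuffle_desgen shuffles0s big_cons big_nil addr0. Qed.

Lemma shuffle_desgens0 P z p :
  shuffle_desgen P z p [::] = if P (last z p) then 'X^(des (z :: p)) else 0.
Proof. by rewrite /shuffle_desgen shuffless0 big_cons big_nil addr0. Qed.

Lemma shuffle_desgen_cons P z x p y d :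
  shuffle_desgen P z (x :: p) (y :: d) =
  'X^((x < z)%R) * shuffle_desgen P x p (y :: d) + 'X^((y < z)%R) * shuffle_desgen P y (x :: p) d.
Proof.
rewrite /shuffle_desgen shuffles_cons big_cat !big_map !mulr_sumr.
by congr (_ + _); apply: eq_bigr => a _; rewrite des_cons2 exprD.
Qed.

Definition des_word (p d : seq int) : seq bool := des_seq d ++ map negb (des_seq p).

Lemma shuffle_desgen_closed p d :
  (forall z, d != [::] -> {in z :: p & d, forall u v : int, u < v} ->
     shuffle_desgen xpredT z p d =
     'X^(des (z :: p)) * subset_poly (false :: des_word (z :: p) d) (size d)) /\
  (forall z, p != [::] -> {in p & z :: d, forall u v : int, u < v} ->
     shuffle_desgen xpredT z p d =
     'X^((des p).+1) * subset_poly (false :: des_word p (z :: d)) (size d)).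
Proof.
elim: p d => [|x p IHp] d.
  split=> // z; case: d => // y d _ lt_zd.
  rewrite shuffle_desgen0s des1 mul1r /des_word cats0.
  rewrite -[size (y :: d)]/(size d).+1 -[size d](size_des_seq (y :: d)) subset_poly_size.
  rewrite -[count id _]/(count id (des_seq (y :: d))) -des_count des_cons2.
  by rewrite lt_gtF ?lt_zd ?mem_head.
elim: d => [|y d IHd].
  split=> // z _ lt_pz.
  by rewrite shuffle_desgens0 subset_poly0 mulr1 des_cons2 lt_pz ?mem_head.
split=> z _ lt_pd.
- have lt_xpyd : {in x :: p & y :: d, forall u v : int, u < v}.
    by move=> u v u_p v_d; apply: lt_pd; rewrite // inE u_p orbT.
  rewrite shuffle_desgen_cons (IHp (y :: d)).1 ?IHd.2 //.
  have lt_zy : z < y by rewrite lt_pd ?mem_head.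
  rewrite (lt_gtF lt_zy) mul1r des_cons2.
  rewrite (subset_poly_mid (false :: des_seq (y :: d))).
  exact: subset_poly_consNX.
- have lt_xpyd : {in x :: p & y :: d, forall u v : int, u < v}.
    by move=> u v u_p v_d; apply: lt_pd; rewrite // inE v_d orbT.
  rewrite shuffle_desgen_cons (IHp (y :: d)).1 ?IHd.2 // lt_pd ?mem_head //.
  rewrite (subset_poly_mid [:: false]).
  exact: subset_poly_consX.
Qed.

Lemma pinned_shuffle_desgen_nil p y : p != [::] -> {in p & [:: y], forall u v : int, u < v} ->
  shuffle_desgen (pred1 y) y p [::] = 0.
Proof.
by case: p => // x p _ lt_py; rewrite shuffle_desgens0 /= lt_eqF ?lt_py ?mem_last ?mem_head.
Qed.

Lemma pinned_shuffle_desgen_closed p d :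
  (forall z y, {in z :: p & y :: d, forall u v : int, u < v} ->
     shuffle_desgen (pred1 (last y d)) z p (y :: d) =
     'X^(des (z :: p)) * subset_poly (des_word (z :: p) (y :: d)) (size d)) /\
  (forall z w, p != [::] -> {in p & [:: z, w & d], forall u v : int, u < v} ->
     shuffle_desgen (pred1 (last w d)) z p (w :: d) =
     'X^((des p).+1) * subset_poly (des_word p [:: z, w & d]) (size d)).
Proof.
elim: p d => [|x p IHp] d.
  split=> // z y lt_zyd.
  rewrite shuffle_desgen0s /= eqxx des1 mul1r /des_word cats0.
  rewrite -[size d](size_des_seq (y :: d)) subset_poly_size -des_count des_cons2.
  by rewrite lt_gtF ?lt_zyd ?mem_head.
elim: d => [|t d IHd].
  split=> [z y | z w _] lt_pd.
    have lt_xpy : {in x :: p & [:: y], forall u v : int, u < v}.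
      by move=> u v u_p v_y; apply: lt_pd; rewrite // inE u_p orbT.
    rewrite shuffle_desgen_cons pinned_shuffle_desgen_nil // (IHp [::]).1 // !subset_poly0.
    by rewrite mulr0 addr0 !mulr1 des_cons2 exprD.
  have lt_xpw : {in x :: p & [:: w], forall u v : int, u < v}.
    by move=> u v u_p v_w; apply: lt_pd; rewrite // inE v_w orbT.
  rewrite shuffle_desgen_cons pinned_shuffle_desgen_nil // (IHp [::]).1 // !subset_poly0.
  by rewrite lt_pd ?mem_head // mulr0 addr0 !mulr1 exprS.
split=> [z y | z w _] lt_pd.
- have lt_xpyd : {in x :: p & [:: y, t & d], forall u v : int, u < v}.
    by move=> u v u_p v_d; apply: lt_pd; rewrite // inE u_p orbT.
  rewrite shuffle_desgen_cons (IHp (t :: d)).1 ?IHd.2 //.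
  have lt_zy : z < y by rewrite lt_pd ?mem_head.
  rewrite (lt_gtF lt_zy) mul1r des_cons2 (subset_poly_mid (des_seq [:: y, t & d])).
  exact: subset_poly_consNX.
- have lt_xpwd : {in x :: p & [:: w, t & d], forall u v : int, u < v}.
    by move=> u v u_p v_d; apply: lt_pd; rewrite // inE v_d orbT.
  rewrite shuffle_desgen_cons (IHp (t :: d)).1 ?IHd.2 // lt_pd ?mem_head //.
  exact: subset_poly_consX.
Qed.

Lemma count_negb_des_word p d : count negb (des_word p d) = ((size d).-1 - des d + des p)%N.
Proof.
rewrite count_cat count_negb_des_seq count_map (eq_count (a2 := id)) -?des_count //.
exact: negbK.
Qed.

Lemma count_id_des_word p d : count id (des_word p d) = (des d + ((size p).-1 - des p))%N.
Proof. by rewrite count_cat count_map -des_count count_negb_des_seq. Qed.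

Lemma des_le_size s : (des s <= (size s).-1)%N.
Proof. by rewrite des_count -size_des_seq count_size. Qed.

Definition desgen_formula (A B j' k' M : nat) : {poly int} :=
  \sum_(1 <= i < M) (binz A (i%:Z + j'%:Z - k'%:Z) * 'C(B, i - 1))%N%:R * 'X^(i + j').

Lemma binz_shift A n v j' k' : (A + k' = n + 1 + j')%N ->
  binz A (v.+1%:Z + j'%:Z - k'%:Z) = if (v <= n)%N then 'C(A, n - v) else 0%N.
Proof.
move=> eq_A; case: ifP => le_vn; case E: (v.+1%:Z + j'%:Z - k'%:Z) => [m|m] //=.
- by rewrite -bin_sub; [congr 'C(_, _) | ]; lia.
- by rewrite bin_small //; lia.
- by rewrite bin_small //; lia.
Qed.

Lemma subset_poly_formula l n A B j' k' M :
  count negb l = A -> count id l = B -> (A + k' = n + 1 + j')%N -> (n.+1 < M)%N ->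
  'X^(j'.+1) * subset_poly l n = desgen_formula A B j' k' M.
Proof.
move=> <- <- eq_A lt_nM; rewrite /subset_poly /choose_poly /desgen_formula mulr_sumr.
case: M lt_nM => // M lt_nM; rewrite big_add1 /= (big_cat_nat _ (n := n.+1)) //=.
rewrite [X in _ + X]big1_seq ?addr0 => [|v /andP[_]]; last first.
  by rewrite mem_index_iota => /andP[lt_nv _]; rewrite (binz_shift _ eq_A) leqNgt lt_nv mul0r.
rewrite big_mkord; apply: eq_bigr => v _; rewrite (binz_shift _ eq_A) -ltnS ltn_ord subn1 /=.
by rewrite mulnC mulrCA -exprD; congr (_ * 'X^_); lia.
Qed.

Lemma desgen_formula_eq0 A B j' k' M : (A + k' <= j')%N -> desgen_formula A B j' k' M = 0.
Proof.
move=> le_A; apply: big1_seq => i /andP[_]; rewrite mem_index_iota => /andP[lt0i _].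
case E: (i%:Z + j'%:Z - k'%:Z) => [m|m] /=; last by rewrite mul0n mul0r.
by rewrite bin_small ?mul0n ?mul0r //; lia.
Qed.

Lemma perm_Sh_l pi delta : uniq (pi ++ delta) ->
  perm_eq (Sh_l pi delta) [seq a <- shuffles pi delta | nth 0 a 0 == nth 0 delta 0].
Proof.
move=> U; apply: uniq_perm; rewrite ?filter_uniq ?permutations_uniq ?uniq_shuffles // => a.
rewrite !mem_filter mem_permutations mem_shuffles //.
have [P | _] := boolP (perm_eq a (pi ++ delta)); last by rewrite !andbF.
by rewrite /is_shuffle (perm_uniq P) U (perm_size P) size_cat eqxx andbT andbC.
Qed.

Lemma desgen_Sh_l pi y d : uniq (pi ++ y :: d) ->
  desgen (Sh_l pi (y :: d)) = shuffle_desgen xpredT y pi d.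
Proof.
move=> U; rewrite /desgen (perm_big _ (perm_Sh_l U)) filter_shuffles_head ?big_map //.
exact: notin_cat_cons U.
Qed.

Lemma desgen_Sh_ls pi y d : uniq (pi ++ y :: d) ->
  desgen (Sh_ls pi (y :: d)) = shuffle_desgen (pred1 (last y d)) y pi d.
Proof.
move=> U; have -> : Sh_ls pi (y :: d) = [seq a <- Sh_l pi (y :: d) | last 0 a == last y d].
  by rewrite /Sh_ls /Sh_l -filter_predI; apply: eq_filter => a; rewrite /= [RHS]andbC andbA.
rewrite /desgen big_filter (perm_big _ (perm_Sh_l U)) filter_shuffles_head ?big_map //.
exact: notin_cat_cons U.
Qed.

Lemma desgen_Sh_ll pi y d : uniq (pi ++ y :: d) ->
  desgen (Sh_ll pi (y :: d)) = \sum_(a <- shuffles pi d | nth 0 a 0 == nth 0 d 0) 'X^(des (y :: a)).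
Proof.
move=> U; have -> : Sh_ll pi (y :: d) = [seq a <- Sh_l pi (y :: d) | nth 0 a 1 == nth 0 d 0].
  by rewrite /Sh_ll /Sh_l -filter_predI; apply: eq_filter => a; rewrite /= [RHS]andbC andbA.
rewrite /desgen big_filter (perm_big _ (perm_Sh_l U)) filter_shuffles_head ?big_map //.
exact: notin_cat_cons U.
Qed.

Lemma desgen_Sh_ll_Sh_l pi y w d : uniq (pi ++ [:: y, w & d]) -> y < w ->
  desgen (Sh_ll pi [:: y, w & d]) = desgen (Sh_l pi (w :: d)).
Proof.
move=> U lt_yw; have Uw : uniq (pi ++ w :: d).
  exact: subseq_uniq (cat_subseq (subseq_refl pi) (subseq_cons _ y)) U.
rewrite desgen_Sh_ll // desgen_Sh_l // -big_filter filter_shuffles_head ?big_map.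
  by apply: eq_bigr => a _; rewrite des_cons2 lt_gtF.
exact: notin_cat_cons Uw.
Qed.

Lemma desgen_Sh_l_formula pi y d j k j' k' M :
  size pi = j -> size d = k -> des pi = j' -> des (y :: d) = k' -> (0 < j)%N ->
  uniq (pi ++ y :: d) -> {in pi & y :: d, forall u v : int, u < v} -> (j + k < M)%N ->
  desgen (Sh_l pi (y :: d)) = desgen_formula (k.+1 - k' + j') (j - j' + k' - 1) j' k' M.
Proof.
move=> size_pi size_d des_pi des_yd j_gt0 U lt_pd lt_M.
have le_j' := des_le_size pi; have le_k' := des_le_size (y :: d).
rewrite size_pi des_pi /= size_d des_yd -subn1 in le_j' le_k'.
rewrite desgen_Sh_l // (shuffle_desgen_closed pi d).2 -?size_eq0 ?size_pi -?lt0n // des_pi.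
apply: subset_poly_formula; rewrite /= ?count_negb_des_word ?count_id_des_word /=;
  rewrite ?size_pi ?size_d ?des_pi ?des_yd -?subn1; lia.
Qed.

Lemma desgen_Sh_ls_formula pi y d j k j' k' M :
  size pi = j -> size d = k -> des pi = j' -> des (y :: d) = k' -> (0 < j)%N ->
  uniq (pi ++ y :: d) -> {in pi & y :: d, forall u v : int, u < v} -> (j + k < M)%N ->
  desgen (Sh_ls pi (y :: d)) = desgen_formula (k - k' + j') (j - j' + k' - 1) j' k' M.
Proof.
move=> size_pi size_d des_pi des_yd j_gt0 U lt_pd lt_M.
have pi_nil : pi != [::] by rewrite -size_eq0 size_pi -lt0n.
case: d => [|w d] in size_d des_yd U lt_pd *.
  rewrite desgen_Sh_ls // pinned_shuffle_desgen_nil //.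
  by symmetry; apply: desgen_formula_eq0; rewrite -size_d -des_yd des1 /=; lia.
have le_j' := des_le_size pi; have le_k' := des_le_size [:: y, w & d].
rewrite size_pi des_pi /= des_yd -subn1 in le_j' le_k'; rewrite /= in size_d.
rewrite desgen_Sh_ls // (pinned_shuffle_desgen_closed pi d).2 // des_pi.
apply: subset_poly_formula; rewrite ?count_negb_des_word ?count_id_des_word /=;
  rewrite ?size_pi ?des_pi ?des_yd -?subn1 /=; lia.
Qed.

Lemma desgen_Sh_ll_formula pi y d j k j' k' M :
  size pi = j -> size d = k -> des pi = j' -> des (y :: d) = k' -> (0 < j)%N ->
  uniq (pi ++ y :: d) -> {in pi & y :: d, forall u v : int, u < v} -> y < nth 0 d 0 ->
  (j + k < M)%N ->
  desgen (Sh_ll pi (y :: d)) = desgen_formula (k - k' + j') (j - j' + k' - 1) j' k' M.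
Proof.
move=> size_pi size_d des_pi des_yd j_gt0 U lt_pd lt_yd lt_M.
case: d => [|w d] in size_d des_yd U lt_pd lt_yd *.
  (* [Sh_ll] pins the second letter to the default [nth 0 [:: y] 1 = 0], which lies
     above [y] and hence above every letter of [pi]. *)
  have pi_lt0 : nth 0 pi 0 < 0.
    by apply: lt_trans lt_yd; rewrite lt_pd ?mem_head ?mem_nth ?size_pi.
  rewrite desgen_Sh_ll // shuffless0 big_cons big_nil /= lt_eqF //.
  by symmetry; apply: desgen_formula_eq0; rewrite -size_d -des_yd des1 /=; lia.
rewrite desgen_Sh_ll_Sh_l //; rewrite /= in size_d; subst k.
apply: desgen_Sh_l_formula => //.
- by rewrite -des_yd des_cons2 lt_gtF.
- exact: subseq_uniq (cat_subseq (subseq_refl pi) (subseq_cons _ y)) U.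
- by move=> u v u_pi v_wd; apply: lt_pd; rewrite // inE v_wd orbT.
- lia.
Qed.

Local Close Scope ring_scope.

Theorem theorem3p4 (j k j' k' : nat) (pi delta : seq int) :
  uniq pi -> uniq delta -> size pi = j -> size delta = k.+1 ->
  0 < j ->
  all (fun x => x \notin delta) pi ->
  des pi = j' -> des delta = k' ->
  (nth 0%R delta 0 < nth 0%R delta 1)%R ->
  (forall x y, x \in pi -> y \in delta -> (x < y)%R) ->
  [/\ desgen (Sh_l pi delta) =
        (\sum_(1 <= i < j + k + 2)
           (binz (k.+1 - k' + j') (i%:Z + j'%:Z - k'%:Z)%R
              * 'C(j - j' + k' - 1, i - 1))%N%:R * 'X^(i + j'))%R,
      desgen (Sh_ls pi delta) =
        (\sum_(1 <= i < j + k + 2)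
           (binz (k - k' + j') (i%:Z + j'%:Z - k'%:Z)%R
              * 'C(j - j' + k' - 1, i - 1))%N%:R * 'X^(i + j'))%R
    & desgen (Sh_ll pi delta) =
        (\sum_(1 <= i < j + k + 2)
           (binz (k - k' + j') (i%:Z + j'%:Z - k'%:Z)%R
              * 'C(j - j' + k' - 1, i - 1))%N%:R * 'X^(i + j'))%R].
Proof.
move=> Upi Udelta size_pi size_delta j_gt0 disj des_pi des_delta lt_delta lt_pd.
case: delta => // y d in size_delta Udelta disj des_delta lt_delta lt_pd *.
case: size_delta => size_d.
have U : uniq (pi ++ y :: d).
  by rewrite cat_uniq Upi Udelta andbT; apply/hasPn => w w_d; exact: contraL (allP disj w) w_d.
have lt_M : j + k < j + k + 2 by rewrite addn2.
split; [exact: desgen_Sh_l_formula | exact: desgen_Sh_ls_formula | exact: desgen_Sh_ll_formula].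
Qed.
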